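(* For every $n\ge 0$, all finite multisets $\Gamma,\Delta$ of compound diagrams and every compound diagram $D$: (i) if $\vdash_n\Gamma\Rightarrow\Delta$ then $\vdash_n D,\Gamma\Rightarrow\Delta$; (ii) if $\vdash_n\Gamma\Rightarrow\Delta$ then $\vdash_n\Gamma\Rightarrow\Delta,D$.
   Context: Fix a countably infinite set $\mathcal V$ of propositional variables. Zones: for a finite set $L\subset\mathcal V$ (contours), a zone over $L$ is a pair $z=(\mathrm{in}(z),\mathrm{out}(z))$ of disjoint subsets of $L$ with union $L$; $\mathcal Z(L)$ is the set of all zones over $L$. Unitary diagrams are of three syntactically distinct kinds. (i) Venn diagram $d=(L,\mathcal Z(L),S)$, $S=S(d)\subseteq\mathcal Z(L)$ the shaded zones. Special Venn diagrams: $\bot=(\emptyset,\{(\emptyset,\emptyset)\},\emptyset)$, $\top=(\emptyset,\{(\emptyset,\emptyset)\},\{(\emptyset,\emptyset)\})$, the positive literal $P_c=(\{c\},\mathcal Z(\{c\}),\{(\{c\},\emptyset)\})$ and negative literal $N_c=(\{c\},\mathcal Z(\{c\}),\{(\emptyset,\{c\})\})$ for $c\in\mathcal V$. (ii) Pure Euler diagram $d=(L,Z)$, $Z\subseteq\mathcal Z(L)$ the visible zones, $M(d)=\mathcal Z(L)\setminus Z$ the missing zones. (iii) Euler–Venn diagram $d=(L,Z,S)$ with $Z\subseteq\mathcal Z(L)$, $S\subseteq Z$; $E(d)=(L,Z)$ (pure Euler), $V(d)=(L,\mathcal Z(L),S)$ (Venn). Compound diagrams: $D::=d\mid D\wedge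 D\mid D\vee D\mid D\to D$ ($d$ unitary). For $c\in L$, $\mathrm{adj}(z,c)$ is the zone obtained from $z$ by moving $c$ from $\mathrm{out}(z)$ to $\mathrm{in}(z)$ or from $\mathrm{in}(z)$ to $\mathrm{out}(z)$. Reduction: $z\setminus c=(\mathrm{in}(z)\setminus\{c\},\mathrm{out}(z)\setminus\{c\})$, and for a pure Euler $d=(L,Z)$, $d\setminus c=(L\setminus\{c\},\{z\setminus c:z\in Z\})$ (pure Euler). A sequent $\Gamma\Rightarrow\Delta$ consists of finite multisets of compound diagrams. The calculus $\mathbf C$ (premisses / conclusion; $\Gamma,\Delta$ arbitrary multisets, $D,E$ compound diagrams): Zero-premiss rules: axiom $P_c,\Gamma\Rightarrow\Delta,P_c$; $(\bot L)$ $\bot,\Gamma\Rightarrow\Delta$; $(\top R)$ $\Gamma\Rightarrow\Delta,\top$. $(\wedge L)$ $D,E,\Gamma\Rightarrow\Delta$ / $D\wedge E,\Gamma\Rightarrow\Delta$. $(\vee L)$ $D,\Gamma\Rightarrow\Delta$ and $E,\Gamma\Rightarrow\Delta$ / $D\vee E,\Gamma\Rightarrow\Delta$. $(\to L)$ $D\to E,\Gamma\Rightarrow D$ and $E,\Gamma\Rightarrow\Delta$ / $D\to E,\Gamma\Rightarrow\Delta$. $(\wedge R)$ $\Gamma\Rightarrow\Delta,D$ and $\Gamma\Rightarrow\Delta,E$ / $\Gamma\Rightarrow\Delta,D\wedge E$. $(\vee R)$ $\Gamma\Rightarrow\Delta,D,E$ / $\Gamma\Rightarrow\Delta,D\vee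 E$. $(\to R)$ $D,\Gamma\Rightarrow E$ / $\Gamma\Rightarrow\Delta,D\to E$. $(\mathrm{lit}L)$ $N_c,\Gamma\Rightarrow P_c$ / $N_c,\Gamma\Rightarrow\Delta$. $(\mathrm{lit}R)$ $P_c,\Gamma\Rightarrow$ (empty succedent) / $\Gamma\Rightarrow\Delta,N_c$. For a Venn $d=(L,\mathcal Z(L),S)$ with $|S|>1$ and $d_i=(L,\mathcal Z(L),S_i)$, $S_1\cup S_2=S$: $(\mathrm{sep}L)$ $d_1,\Gamma\Rightarrow\Delta$ and $d_2,\Gamma\Rightarrow\Delta$ / $d,\Gamma\Rightarrow\Delta$; $(\mathrm{sep}R)$ $\Gamma\Rightarrow\Delta,d_1,d_2$ / $\Gamma\Rightarrow\Delta,d$. For a Venn $d$ with $S(d)=\{z\}$, $z=(\{n_1,\dots,n_k\},\{o_1,\dots,o_l\})$: $(\mathrm{dec}L)$ $P_{n_1},\dots,P_{n_k},N_{o_1},\dots,N_{o_l},\Gamma\Rightarrow\Delta$ / $d,\Gamma\Rightarrow\Delta$; $(\mathrm{dec}R)$ $\Gamma\Rightarrow\Delta,P_{n_i}$ ($1\le i\le k$) and $\Gamma\Rightarrow\Delta,N_{o_j}$ ($1\le j\le l$) / $\Gamma\Rightarrow\Delta,d$. For a pure Euler $d=(L,Z)$ such that every $z\in M(d)$ has some $\ell\in L$ with $\mathrm{adj}(z,\ell)\in M(d)$, and $\{c_1,\dots,c_k\}\subseteq L$ the maximal set of contours with $M(d\setminus c_i)\neq\emptyset$: $(\mathrm{red}L)$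 $d\setminus c_1,\dots,d\setminus c_k,\Gamma\Rightarrow\Delta$ / $d,\Gamma\Rightarrow\Delta$; $(\mathrm{red}R)$ $\Gamma\Rightarrow\Delta,d\setminus c_i$ ($1\le i\le k$) / $\Gamma\Rightarrow\Delta,d$. For a pure Euler $d=(L,Z)$ with $|M(d)|>1$ and pure Euler $d_1=(L,Z_1)$, $d_2=(L,Z_2)$ with $Z_1\cap Z_2=Z$: $(\mathrm{mzsep}L)$ $d_1,d_2,\Gamma\Rightarrow\Delta$ / $d,\Gamma\Rightarrow\Delta$; $(\mathrm{mzsep}R)$ $\Gamma\Rightarrow\Delta,d_1$ and $\Gamma\Rightarrow\Delta,d_2$ / $\Gamma\Rightarrow\Delta,d$. For a pure Euler $d$ with $M(d)=\{z\}$, $z=(\{n_1,\dots,n_k\},\{o_1,\dots,o_l\})$: $(\mathrm{impdec}L)$ $d,\Gamma\Rightarrow P_{n_i}$ ($1\le i\le k$) and $P_{o_j},\Gamma\Rightarrow\Delta$ ($1\le j\le l$) / $d,\Gamma\Rightarrow\Delta$; $(\mathrm{impdec}R)$ $P_{n_1},\dots,P_{n_k},\Gamma\Rightarrow P_{o_1},\dots,P_{o_l}$ / $\Gamma\Rightarrow\Delta,d$. For an Euler–Venn $d$: $(\mathrm{det}L)$ $d,\Gamma\Rightarrow E(d)$ and $V(d),\Gamma\Rightarrow\Delta$ / $d,\Gamma\Rightarrow\Delta$; $(\mathrm{det}R)$ $E(d),\Gamma\Rightarrow V(d)$ / $\Gamma\Rightarrow\Delta,d$. A proof of a sequent is a finite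 tree of rule instances with that sequent at the root and all leaves instances of zero-premiss rules. Its height is the largest number of successive rule applications along a branch (so a single zero-premiss instance has height $0$). $\vdash_n\Gamma\Rightarrow\Delta$ means that $\Gamma\Rightarrow\Delta$ has a proof of height at most $n$. *)

From HB Require Import structures.
From mathcomp Require Import all_boot.
From mathcomp Require Import finmap.
From Stdlib Require List.
From Stdlib Require Import Permutation.

Set Implicit Arguments.
Unset Strict Implicit.
Unset Printing Implicit Defensive.

Local Open Scope fset_scope.

(* Propositional variables / contour labels: the countably infinite set nat. *)
Definition var := nat.

Definition zone := ({fset var} * {fset var})%type.
Definition zin (z : zone) : {fset var} := z.1.
Definition zout (z : zone) : {fset var} := z.2.

Definition is_zone (L : {fset var}) (z : zone) : bool :=
  (zin z `&` zout z == fset0) && (zin z `|` zout z == L).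

Definition allzones (L : {fset var}) : {fset zone} :=
  [fset ((A, L `\` A) : zone) | A in fpowerset L].

Inductive unitary : Type :=
| Venn  (L : {fset var}) (S : {fset zone})               (* (L, Z(L), S) *)
| Euler (L : {fset var}) (Z : {fset zone})
| EV    (L : {fset var}) (Z : {fset zone}) (S : {fset zone}).

Inductive diag : Type :=
| U    of unitary
| DAnd of diag & diag
| DOr  of diag & diag
| DImp of diag & diag.

Definition wf_unitary (d : unitary) : bool :=
  match d with
  | Venn L Sz => Sz `<=` allzones L
  | Euler L Z => Z `<=` allzones L
  | EV L Z Sz => (Z `<=` allzones L) && (Sz `<=` Z)
  end.

Fixpoint wf_diag (D : diag) : bool :=
  match D with
  | U d => wf_unitary d
  | DAnd D E | DOr D E | DImp D E => wf_diag D && wf_diag E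
  end.

Definition Bot : diag := U (Venn fset0 fset0).
Definition Top : diag := U (Venn fset0 [fset ((fset0, fset0) : zone)]).
Definition Pl (c : var) : diag :=
  U (Venn [fset c] [fset (([fset c], fset0) : zone)]).
Definition Nl (c : var) : diag :=
  U (Venn [fset c] [fset ((fset0, [fset c]) : zone)]).

Definition adj (z : zone) (c : var) : zone :=
  if c \in zin z then (zin z `\ c, zout z `|` [fset c])
  else (zin z `|` [fset c], zout z `\ c).

Definition zred (z : zone) (c : var) : zone := (zin z `\ c, zout z `\ c).

Definition missing (L : {fset var}) (Z : {fset zone}) : {fset zone} :=
  allzones L `\` Z.

Definition red_L (L : {fset var}) (c : var) : {fset var} := L `\ c.
Definition red_Z (Z : {fset zone}) (c : var) : {fset zone} :=
  [fset zred z c | z in Z].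
Definition red (L : {fset var}) (Z : {fset zone}) (c : var) : diag :=
  U (Euler (red_L L c) (red_Z Z c)).

Definition red_contours (L : {fset var}) (Z : {fset zone}) : {fset var} :=
  [fset c in L | missing (red_L L c) (red_Z Z c) != fset0].

Definition red_cond (L : {fset var}) (Z : {fset zone}) : Prop :=
  forall z, z \in missing L Z -> exists2 l, l \in L & adj z l \in missing L Z.

(* Sequents: pairs of finite multisets of compound diagrams, represented by
   lists up to permutation. *)
Definition sequent := (list diag * list diag)%type.

Definition lits_P (A : {fset var}) : list diag := map Pl (enum_fset A).
Definition lits_N (A : {fset var}) : list diag := map Nl (enum_fset A).

(* Rule instances of the calculus C, on list representatives:
   rule0 premisses conclusion. *)
Inductive rule0 : list sequent -> sequent -> Prop :=
| r_ax c G D : rule0 nil (Pl c :: G, Pl c :: D)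
| r_botL G D : rule0 nil (Bot :: G, D)
| r_topR G D : rule0 nil (G, Top :: D)
| r_andL A B G D : rule0 ((A :: B :: G, D) :: nil) (DAnd A B :: G, D)
| r_orL A B G D : rule0 ((A :: G, D) :: (B :: G, D) :: nil) (DOr A B :: G, D)
| r_impL A B G D :
    rule0 ((DImp A B :: G, A :: nil) :: (B :: G, D) :: nil) (DImp A B :: G, D)
| r_andR A B G D : rule0 ((G, A :: D) :: (G, B :: D) :: nil) (G, DAnd A B :: D)
| r_orR A B G D : rule0 ((G, A :: B :: D) :: nil) (G, DOr A B :: D)
| r_impR A B G D : rule0 ((A :: G, B :: nil) :: nil) (G, DImp A B :: D)
| r_litL c G D : rule0 ((Nl c :: G, Pl c :: nil) :: nil) (Nl c :: G, D)
| r_litR c G D : rule0 ((Pl c :: G, nil) :: nil) (G, Nl c :: D)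
| r_sepL L S S1 S2 G D :
    1 < #|` S| -> S1 `|` S2 = S ->
    rule0 ((U (Venn L S1) :: G, D) :: (U (Venn L S2) :: G, D) :: nil)
          (U (Venn L S) :: G, D)
| r_sepR L S S1 S2 G D :
    1 < #|` S| -> S1 `|` S2 = S ->
    rule0 ((G, U (Venn L S1) :: U (Venn L S2) :: D) :: nil)
          (G, U (Venn L S) :: D)
| r_decL L z G D :
    rule0 ((lits_P (zin z) ++ lits_N (zout z) ++ G, D) :: nil)
          (U (Venn L [fset z]) :: G, D)
| r_decR L z G D :
    rule0 (map (fun c => (G, Pl c :: D)) (enum_fset (zin z)) ++
           map (fun c => (G, Nl c :: D)) (enum_fset (zout z)))
          (G, U (Venn L [fset z]) :: D)
| r_redL L Z G D :
    red_cond L Z ->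
    rule0 ((map (red L Z) (enum_fset (red_contours L Z)) ++ G, D) :: nil)
          (U (Euler L Z) :: G, D)
| r_redR L Z G D :
    red_cond L Z ->
    rule0 (map (fun c => (G, red L Z c :: D)) (enum_fset (red_contours L Z)))
          (G, U (Euler L Z) :: D)
| r_mzsepL L Z Z1 Z2 G D :
    1 < #|` missing L Z| -> Z1 `<=` allzones L -> Z2 `<=` allzones L ->
    Z1 `&` Z2 = Z ->
    rule0 ((U (Euler L Z1) :: U (Euler L Z2) :: G, D) :: nil)
          (U (Euler L Z) :: G, D)
| r_mzsepR L Z Z1 Z2 G D :
    1 < #|` missing L Z| -> Z1 `<=` allzones L -> Z2 `<=` allzones L ->
    Z1 `&` Z2 = Z ->
    rule0 ((G, U (Euler L Z1) :: D) :: (G, U (Euler L Z2) :: D) :: nil)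
          (G, U (Euler L Z) :: D)
| r_impdecL L Z z G D :
    missing L Z = [fset z] ->
    rule0 (map (fun c => (U (Euler L Z) :: G, Pl c :: nil)) (enum_fset (zin z)) ++
           map (fun c => (Pl c :: G, D)) (enum_fset (zout z)))
          (U (Euler L Z) :: G, D)
| r_impdecR L Z z G D :
    missing L Z = [fset z] ->
    rule0 ((lits_P (zin z) ++ G, lits_P (zout z)) :: nil)
          (G, U (Euler L Z) :: D)
| r_detL L Z S G D :
    rule0 ((U (EV L Z S) :: G, U (Euler L Z) :: nil) ::
           (U (Venn L S) :: G, D) :: nil)
          (U (EV L Z S) :: G, D)
| r_detR L Z S G D :
    rule0 ((U (Euler L Z) :: G, U (Venn L S) :: nil) :: nil)
          (G, U (EV L Z S) :: D).

(* Sequents are multisets: a rule instance may have any permutation of the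
   antecedent/succedent of a representative conclusion. *)
Definition rule (ps : list sequent) (s : sequent) : Prop :=
  exists s', rule0 ps s' /\ Permutation s.1 s'.1 /\ Permutation s.2 s'.2.

(* provable n s  <->  s has a proof of height at most n, where a
   zero-premiss rule instance has height 0 and a rule application adds 1 to
   the maximal height of the proofs of its premisses. *)
Inductive provable : nat -> sequent -> Prop :=
| prov_leaf n s : rule nil s -> provable n s
| prov_node n ps s :
    rule ps s -> (forall p, List.In p ps -> provable n p) -> provable (S n) s.

From mathcomp Require Import all_boot finmap.
From Stdlib Require List.
From Stdlib Require Import Permutation.

(* Every rule of C shares its side contexts Gamma, Delta between conclusion and
   premisses, except that some premisses have a fixed succedent (->L, ->R,
   litL, litR, impdecL, impdecR, detL, detR).  Instantiating a rule with the
   enlarged contexts Gamma ++ X, Delta ++ Y thus gives an instance of the same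
   rule whose premisses enlarge the old ones, and weakening follows by
   induction on the proof without increasing its height. *)

Definition sub_sequent (p q : sequent) : Prop :=
  exists X Y, Permutation q.1 (p.1 ++ X) /\ Permutation q.2 (p.2 ++ Y).

Lemma Forall2_map_map (A B C : Type) (R : A -> B -> Prop)
    (f : C -> A) (g : C -> B) s :
  (forall x, R (f x) (g x)) -> List.Forall2 R (map f s) (map g s).
Proof. by move=> Rfg; elim: s => //= x s IHs; constructor. Qed.

Lemma Forall2_In_r {A B : Type} {R : A -> B -> Prop} {s s' y} :
  List.Forall2 R s s' -> List.In y s' -> exists2 x, List.In x s & R x y.
Proof.
elim=> // x x' {}s {}s' Rxx' _ IHs /= [<-|].
  by exists x; first left.
by case/IHs=> z sz Rzy; exists z; first right.
Qed.

Section RuleWeakening.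

Variables X Y : seq diag.

Ltac extended_premiss :=
  first [ by exists X, Y; rewrite /= -?catA; split; apply: Permutation_refl
        | by exists X, [::]; rewrite /= -?catA ?cats0; split;
             apply: Permutation_refl ].

Ltac extended_premisses :=
  repeat first [ apply: List.Forall2_nil | apply: List.Forall2_cons
               | apply: List.Forall2_app | apply: Forall2_map_map => ?
               | extended_premiss ].

(* Unifying the conclusion with (s.1 ++ X, s.2 ++ Y) instantiates the rule
   with the contexts G ++ X and D ++ Y. *)
Tactic Notation "weaken_by" uconstr(r) :=
  eexists; [eapply r | extended_premisses].

Lemma rule0_weaken {ps s} : rule0 ps s ->
  exists2 ps', rule0 ps' (s.1 ++ X, s.2 ++ Y) & List.Forall2 sub_sequent ps ps'.
Proof.
case=> [c G D|G D|G D|A B G D|A B G D|A B G D|A B G D|A B G D|A B G D|c G D|c G D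
  |L S S1 S2 G D h1 h2|L S S1 S2 G D h1 h2|L z G D|L z G D|L Z G D h|L Z G D h
  |L Z Z1 Z2 G D h1 h2 h3 h4|L Z Z1 Z2 G D h1 h2 h3 h4|L Z z G D h|L Z z G D h
  |L Z S G D|L Z S G D] /=.
- weaken_by r_ax.
- weaken_by r_botL.
- weaken_by r_topR.
- weaken_by r_andL.
- weaken_by r_orL.
- weaken_by r_impL.
- weaken_by r_andR.
- weaken_by r_orR.
- weaken_by r_impR.
- weaken_by r_litL.
- weaken_by r_litR.
- weaken_by (r_sepL _ _ _ h1 h2).
- weaken_by (r_sepR _ _ _ h1 h2).
- weaken_by r_decL.
- weaken_by r_decR.
- weaken_by (r_redL _ _ h).
- weaken_by (r_redR _ _ h).
- weaken_by (r_mzsepL _ _ h1 h2 h3 h4).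
- weaken_by (r_mzsepR _ _ h1 h2 h3 h4).
- weaken_by (r_impdecL _ _ h).
- weaken_by (r_impdecR _ _ h).
- weaken_by r_detL.
- weaken_by r_detR.
Qed.

End RuleWeakening.

Lemma rule_weaken {ps s t} : rule ps s -> sub_sequent s t ->
  exists2 ps', rule ps' t & List.Forall2 sub_sequent ps ps'.
Proof.
move=> [s0 [r0 [perm1 perm2]]] [X [Y [permX permY]]].
have [ps' r0' sub_ps] := rule0_weaken X Y r0.
exists ps' => //; exists (s0.1 ++ X, s0.2 ++ Y); split=> //=; split.
- exact: Permutation_trans permX (Permutation_app_tail X perm1).
- exact: Permutation_trans permY (Permutation_app_tail Y perm2).
Qed.

Lemma provable_weaken n s t : provable n s -> sub_sequent s t -> provable n t.
Proof.
move=> prov_s; elim: prov_s t => [{}n {}s r|{}n ps {}s r _ IHps] t;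
  move=> /(rule_weaken r) [ps' r' sub_ps].
- by case: ps' sub_ps r' => [_|? ? /List.Forall2_length //]; apply: prov_leaf.
- apply: prov_node r' _ => q /(Forall2_In_r sub_ps) [p ps_p sub_pq].
  exact: IHps ps_p q sub_pq.
Qed.

Theorem lemma13 :
  forall (n : nat) (G Dl : list diag) (D : diag),
    List.Forall (fun E => wf_diag E) G -> List.Forall (fun E => wf_diag E) Dl ->
    wf_diag D ->
    (provable n (G, Dl) -> provable n (D :: G, Dl)) /\
    (provable n (G, Dl) -> provable n (G, Dl ++ D :: nil)).
Proof.
move=> n G Dl D _ _ _; split=> /provable_weaken; apply.
- exists [:: D], [::]; rewrite cats0; split; first exact: Permutation_cons_append.
  exact: Permutation_refl.
- by exists [::], [:: D]; rewrite cats0; split; apply: Permutation_refl.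
Qed.
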